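(* Let $N\ge 1$, $h,\varepsilon\in(0,1)$, and let $V=(v_1,\dots,v_N)\in[-1,1]^N$ satisfy $v_1\le v_2\le\dots\le v_N$. For $k=1,\dots,N$ let $J(v_k)=\{l\in\{1,\dots,N\}: |v_l-v_k|\le\varepsilon\}$, let $I(v_k)$ be its cardinality, and set $$\Delta_k=\frac{h}{I(v_k)}\sum_{l\in J(v_k)} v_l .$$ Then $\Delta_{k+1}\ge \Delta_k$ for $k=1,\dots,N-1$.
   Context: $\Delta_k=w_k(V)-v_k$, where $w_k(V)=v_k+\frac{h}{I(v_k)}\sum_{l\in J(v_k)}v_l$ is the unclipped update of the opinion model. *)

(* Opinions are indexed 1..N as in the paper: v : nat -> R,
   only the values v 1, ..., v N matter. *)
From mathcomp Require Import all_boot all_order all_algebra.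
Set Implicit Arguments. Unset Strict Implicit. Unset Printing Implicit Defensive.
Import Order.TTheory GRing.Theory Num.Theory.
Local Open Scope ring_scope.

Definition inJ {R : realFieldType} (eps : R) (v : nat -> R) (k l : nat) : bool :=
  `|v l - v k| <= eps.

Definition Icard {R : realFieldType} (N : nat) (eps : R) (v : nat -> R) (k : nat) : nat :=
  count (inJ eps v k) (iota 1 N).

Definition Delta {R : realFieldType} (N : nat) (h eps : R) (v : nat -> R) (k : nat) : R :=
  h / (Icard N eps v k)%:R * \sum_(l <- iota 1 N | inJ eps v k l) v l.

From mathcomp Require Import all_boot all_order all_algebra.
From mathcomp Require Import lra zify.
Import Order.TTheory GRing.Theory Num.Theory.
Local Open Scope ring_scope.

(* Write a = v_k <= b = v_(k+1).  The neighbourhoods J(a) and J(b) have an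
   exchange property: if x is in J(b), y is in J(a) and x <= y, then x is in
   J(a) and y is in J(b).  After cross-multiplying, the difference of the two
   means is the sum of v_j - v_i over i in J(a), j in J(b); the exchange
   property makes the terms for (i, j) and (j, i) add up to something
   nonnegative, so the symmetrised double sum is nonnegative. *)

Section ExchangeMean.

Variables (R : realFieldType) (I : Type) (s : seq I) (P Q : pred I) (f : I -> R).

Hypothesis exchangePQ : forall i j, Q i -> P j -> f i <= f j -> P i && Q j.

Let g i j := (P i && Q j)%:R * (f j - f i).

Lemma exchange_pair_ge0 i j : 0 <= g i j + g j i.
Proof.
wlog fij : i j / f i <= f j.
  move=> hwlog; have [/hwlog //|/ltW/hwlog] := lerP (f i) (f j).
  by rewrite addrC.
rewrite /g; have [QiPj|] := boolP (Q i && P j).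
  have /andP[Qi Pj] := QiPj.
  by rewrite Pj Qi /= (exchangePQ _ _ Qi Pj fij) /= !mul1r addrC subrKA subrr.
rewrite andbC => /negbTE ->; rewrite mul0r addr0.
by apply: mulr_ge0; rewrite ?ler0n ?subr_ge0.
Qed.

Lemma sum_mul_count_le_exchange :
  (\sum_(i <- s | P i) f i) * (count Q s)%:R <=
  (\sum_(j <- s | Q j) f j) * (count P s)%:R.
Proof.
have sum_cross (F G : I -> R) :
    (\sum_(i <- s | P i) F i) * (\sum_(j <- s | Q j) G j) =
    \sum_(i <- s | P i) \sum_(j <- s | Q j) F i * G j.
  exact: big_distrlr.
rewrite -!sum1_count !natr_sum [X in _ <= X]mulrC !sum_cross -subr_ge0 -sumrB.
under eq_bigr do rewrite -sumrB.
have -> : \sum_(i <- s | P i) \sum_(j <- s | Q j) (1 * f j - f i * 1) =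
          \sum_(i <- s) \sum_(j <- s) g i j.
  rewrite big_mkcond; apply: eq_bigr => i _; rewrite big_mkcond /g /=.
  case: (P i) => /=; last by rewrite big1 // => j _; rewrite mul0r.
  by apply: eq_bigr => j _; case: (Q j); rewrite ?mul1r ?mul0r ?mulr1.
set E := (X in 0 <= X).
have E2 : E *+ 2 = \sum_(i <- s) \sum_(j <- s) (g i j + g j i).
  rewrite mulr2n {2}/E exchange_big -big_split /=.
  by apply: eq_bigr => i _; rewrite -big_split.
rewrite -(pmulrn_lge0 _ (isT : (0 < 2)%N)) E2.
by apply: sumr_ge0 => i _; apply: sumr_ge0 => j _; exact: exchange_pair_ge0.
Qed.

Lemma mean_le_exchange : (0 < count P s)%N -> (0 < count Q s)%N ->
  (\sum_(i <- s | P i) f i) / (count P s)%:R <=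
  (\sum_(j <- s | Q j) f j) / (count Q s)%:R.
Proof.
move=> cP cQ; rewrite ler_pdivlMr ?ltr0n // mulrAC ler_pdivrMr ?ltr0n //.
exact: sum_mul_count_le_exchange.
Qed.

End ExchangeMean.

Lemma inJ_exchange (R : realFieldType) (eps : R) (v : nat -> R) k k' i j :
  v k <= v k' -> inJ eps v k' i -> inJ eps v k j -> v i <= v j ->
  inJ eps v k i && inJ eps v k' j.
Proof.
by rewrite /inJ !ler_norml => vkk' /andP[? ?] /andP[? ?] vij; apply/andP; split;
  apply/andP; split; lra.
Qed.

Lemma Icard_gt0 (R : realFieldType) N (eps : R) (v : nat -> R) k :
  0 <= eps -> (1 <= k <= N)%N -> (0 < Icard N eps v k)%N.
Proof.
move=> eps_ge0 kN; rewrite -has_count; apply/hasP; exists k.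
  by rewrite mem_iota; lia.
by rewrite /inJ subrr normr0.
Qed.

Theorem lemma2 (R : realFieldType) (N : nat) (h eps : R) (v : nat -> R) :
  (1 <= N)%N ->
  0 < h < 1 -> 0 < eps < 1 ->
  (forall i : nat, (1 <= i <= N)%N -> -1 <= v i <= 1) ->
  (forall i : nat, (1 <= i < N)%N -> v i <= v i.+1) ->
  forall k : nat, (1 <= k <= N - 1)%N -> Delta N h eps v k <= Delta N h eps v k.+1.
Proof.
move=> _ /andP[h_gt0 _] /andP[/ltW eps_ge0 _] _ v_mono k /andP[k_ge1 k_lt].
have vk_le : v k <= v k.+1 by apply: v_mono; lia.
rewrite /Delta -!mulrA ![_^-1 * _]mulrC ler_pM2l //.
apply: mean_le_exchange; [|by apply: Icard_gt0 => //; lia ..].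
by move=> i j; apply: inJ_exchange.
Qed.
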